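(* Let $\mathscr C,J$ be as defined below. The isomorphism classes of points of the topos $\mathfrak{Sh}(\mathscr C,J)$ are in canonical bijection with the disjoint union of (a) the set of isomorphism classes of abstract (non-trivial) rank one totally ordered abelian groups $H$, via $H\mapsto\mathfrak{q}_H$, and (b) the set of non-trivial rank one subgroups $H\subset\mathbb{R}$, via $H\mapsto\mathfrak{p}_H$. Here $\mathfrak{p}_H$ is the point given by the flat continuous functor $F_H(V)=V\cap H\cap(0,\infty)$ (morphisms $n$ acting by multiplication by $n$), and $\mathfrak{q}_H$ is the point given by the flat continuous functor $F'_H$ with $F'_H(V)=\emptyset$ if $0\notin V$ and $F'_H(V)=H_+:=\{h\in H\mid h>0\}$ if $0\in V$ (morphisms $n$ acting by multiplication by $n$ on $H_+$). (This disjoint union is the set of points of the arithmetic site over $\mathbb{R}_+^{\max}$, i.e. the sector $\mathbb{Q}^\times\backslash\mathbb{A}_{\mathbb{Q}}/\hat{\mathbb{Z}}^*$ of the adele class space of $\mathbb{Q}$.)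
   Context: $\mathbb{N}^{\times}$ is the multiplicative monoid of positive integers. $\mathscr C$ is the small category whose objects are the (possibly empty) bounded open subintervals of $[0,\infty)$ (including intervals $[0,a)$), with $\mathrm{Hom}_{\mathscr C}(\Omega,\Omega')=\{n\in\mathbb{N}^{\times}\mid n\Omega\subset\Omega'\}$ for $\Omega\neq\emptyset$, $\mathrm{Hom}_{\mathscr C}(\emptyset,\Omega')$ a singleton, composition being multiplication. $J$ is the Grothendieck topology on $\mathscr C$ generated by ordinary open covers of intervals by subintervals; $\mathfrak{Sh}(\mathscr C,J)$ is equivalent to the topos of $\mathbb{N}^{\times}$-equivariant sheaves of sets on $[0,\infty)$, denoted $[0,\infty)\rtimes\mathbb{N}^{\times}$. Points of this topos correspond to flat (i.e. filtering) continuous (i.e. sending covers to jointly surjective families) functors $\mathscr C\to\mathfrak{Sets}$. A rank one group is one isomorphic to a non-zero subgroup of $\mathbb{Q}$; an abstract rank one ordered group is a totally ordered abelian group order-isomorphic to a non-zero subgroup of $\mathbb{Q}$. *)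

From HB Require Import structures.
From mathcomp Require Import all_boot all_order all_algebra.
From mathcomp Require Import Rstruct.
From Stdlib Require Import Rdefinitions ProofIrrelevance.

Set Implicit Arguments.
Unset Strict Implicit.
Unset Printing Implicit Defensive.

Import Order.TTheory GRing.Theory Num.Theory.
Local Open Scope ring_scope.

Notation R := Rdefinitions.R.

(* Objects: (possibly empty) bounded open subintervals of [0,oo),      *)

Definition is_obj (U : R -> Prop) : Prop :=
  (forall x, ~ U x) \/
  (exists a b : R, 0 <= a /\ a < b /\ forall x, U x <-> (a < x /\ x < b)) \/
  (exists b : R, 0 < b /\ forall x, U x <-> (0 <= x /\ x < b)).

Record obj := Obj { oset :> R -> Prop; oset_ok : is_obj oset }.

Definition obj_empty (U : obj) : Prop := forall x, ~ U x.

Definition hom (n : nat) (U V : obj) : Prop :=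
  (0 < n)%nat /\ forall x, U x -> V (x *+ n).

(* Equality of morphisms U -> V : Hom(empty, V) is a singleton, so all
   n are identified when the source is empty; otherwise equality of n. *)
Definition hom_eq (U : obj) (n m : nat) : Prop := obj_empty U \/ n = m.

Record functor := Functor {
  F0 : obj -> Type;
  F1 : forall (n : nat) (U V : obj), hom n U V -> F0 U -> F0 V;
  F1_wd : forall n m U V (p : hom n U V) (q : hom m U V) (x : F0 U),
            hom_eq U n m -> F1 p x = F1 q x;
  F1_id : forall U (p : hom 1 U U) (x : F0 U), F1 p x = x;
  F1_comp : forall n m U V W (p : hom n U V) (q : hom m V W)
              (r : hom (m * n) U W) (x : F0 U),
            F1 q (F1 p x) = F1 r x
}.

Definition flat (F : functor) : Prop :=
  (exists U, inhabited (F0 F U)) /\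
  (forall U V (x : F0 F U) (y : F0 F V),
     exists W (z : F0 F W) n m (p : hom n W U) (q : hom m W V),
       F1 p z = x /\ F1 q z = y) /\
  (forall U V n m (p : hom n U V) (q : hom m U V) (x : F0 F U),
     F1 p x = F1 q x ->
     exists W (z : F0 F W) k (r : hom k W U),
       F1 r z = x /\ hom_eq W (n * k) (m * k)).

(* Continuous: sends the generating covers of J (ordinary open covers
   of an interval U by subintervals U_i, with inclusions 1 : U_i -> U)
   to jointly surjective families. *)
Definition continuous (F : functor) : Prop :=
  forall (U : obj) (I : Type) (Ui : I -> obj) (sub : forall i, hom 1 (Ui i) U),
    (forall x, U x -> exists i, Ui i x) ->
    forall y : F0 F U, exists i (z : F0 F (Ui i)), F1 (sub i) z = y.

Definition iso_functor (F G : functor) : Prop :=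
  exists (a : forall U, F0 F U -> F0 G U) (b : forall U, F0 G U -> F0 F U),
    (forall U x, b U (a U x) = x) /\ (forall U y, a U (b U y) = y) /\
    (forall n U V (p : hom n U V) (x : F0 F U), a V (@F1 F _ _ _ p x) = @F1 G _ _ _ p (a U x)).

Definition subgroupQ (S : rat -> Prop) : Prop :=
  S 0 /\ (forall x y, S x -> S y -> S (x - y)).

Definition subgroupR (H : R -> Prop) : Prop :=
  H 0 /\ (forall x y, H x -> H y -> H (x - y)).

Definition rank_one_R (H : R -> Prop) : Prop :=
  subgroupR H /\
  exists (S : rat -> Prop) (f : R -> rat),
    subgroupQ S /\ (exists q, S q /\ q <> 0) /\
    (forall x y, H x -> H y -> f (x + y) = f x + f y) /\
    (forall x y, H x -> H y -> f x = f y -> x = y) /\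
    (forall x, H x -> S (f x)) /\
    (forall q, S q -> exists x, H x /\ f x = q).

(* Abstract rank one ordered group: an abelian group with a relation le
   which is order-isomorphic (as an ordered group) to a non-zero subgroup
   of Q with its induced order (this forces le to be a translation
   invariant total order). *)
Record r1og := R1og {
  og_car : zmodType;
  og_le : og_car -> og_car -> Prop;
  og_rank1 : exists (S : rat -> Prop) (f : og_car -> rat),
    subgroupQ S /\ (exists q, S q /\ q <> 0) /\
    (forall x y, f (x + y) = f x + f y) /\
    (forall x y, f x = f y -> x = y) /\
    (forall x, S (f x)) /\
    (forall q, S q -> exists x, f x = q) /\
    (forall x y, og_le x y <-> f x <= f y)
}.

Definition og_pos (G : r1og) (h : og_car G) : Prop := og_le 0 h /\ h <> 0.

Definition og_iso (G G' : r1og) : Prop :=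
  exists phi : og_car G -> og_car G',
    (forall x y, phi (x + y) = phi x + phi y) /\
    (forall x y, phi x = phi y -> x = y) /\
    (forall y, exists x, phi x = y) /\
    (forall x y, @og_le G x y <-> @og_le G' (phi x) (phi y)).

Lemma subgroupR_add H : subgroupR H -> forall x y, H x -> H y -> H (x + y).
Proof.
move=> [H0 Hs] x y hx hy.
have hny : H (- y) by rewrite -sub0r; apply: Hs.
by rewrite -(opprK y); apply: Hs.
Qed.

Lemma subgroupR_muln H : subgroupR H -> forall x n, H x -> H (x *+ n).
Proof.
move=> hH x n hx; elim: n => [|n IH]; first by rewrite mulr0n; case: hH.
by rewrite mulrS; apply: subgroupR_add.
Qed.

Lemma sig_eqP (A : Type) (P : A -> Prop) (x y : {a : A | P a}) :
  proj1_sig x = proj1_sig y -> x = y.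
Proof.
case: x y => [a pa] [b pb] /= eab; subst b.
by congr exist; exact: proof_irrelevance.
Qed.

Definition FH0 (H : R -> Prop) (U : obj) : Type :=
  {x : R | U x /\ H x /\ 0 < x}.

Lemma FH_closed H (hH : rank_one_R H) n U V (p : hom n U V) (x : R) :
  U x /\ H x /\ 0 < x -> V (x *+ n) /\ H (x *+ n) /\ 0 < x *+ n.
Proof.
case: p => n0 incl [ux [hx x0]]; split; first exact: incl.
split; first by apply: subgroupR_muln => //; case: hH.
by rewrite pmulrn_lgt0.
Qed.

Definition FH1 H (hH : rank_one_R H) n U V (p : hom n U V) (x : FH0 H U) : FH0 H V :=
  exist _ (proj1_sig x *+ n) (FH_closed hH p (proj2_sig x)).

Lemma FH1_wd H (hH : rank_one_R H) n m U V (p : hom n U V) (q : hom m U V)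
  (x : FH0 H U) : hom_eq U n m -> FH1 hH p x = FH1 hH q x.
Proof.
case=> [emp|enm].
  by exfalso; exact: (emp _ (proj1 (proj2_sig x))).
by subst m; apply: sig_eqP.
Qed.

Lemma FH1_id H (hH : rank_one_R H) U (p : hom 1 U U) (x : FH0 H U) :
  FH1 hH p x = x.
Proof.
by apply: sig_eqP; rewrite /= mulr1n.
Qed.

Lemma FH1_comp H (hH : rank_one_R H) n m U V W (p : hom n U V) (q : hom m V W)
  (r : hom (m * n) U W) (x : FH0 H U) : FH1 hH q (FH1 hH p x) = FH1 hH r x.
Proof.
by apply: sig_eqP; rewrite /= -mulrnA mulnC.
Qed.

Definition FH H (hH : rank_one_R H) : functor :=
  Functor (@FH1_wd H hH) (@FH1_id H hH) (@FH1_comp H hH).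

Lemma og_pos_muln (G : r1og) (h : og_car G) n :
  (0 < n)%nat -> og_pos h -> og_pos (h *+ n).
Proof.
move=> n0 [le0 hn0].
case: (og_rank1 G) => S [f [_ [_ [fadd [finj [_ [_ fle]]]]]]].
have f0 : f 0 = 0.
  by apply: (addrI (f 0)); rewrite -fadd !addr0.
have fn : forall k, f (h *+ k) = f h *+ k.
  by elim=> [|k IH]; rewrite ?mulr0n // !mulrS fadd IH.
have fh : 0 < f h.
  have : f 0 <= f h by apply/fle.
  rewrite f0 => ge; rewrite lt_def ge andbT.
  by apply/eqP => e; apply: hn0; apply: finj; rewrite e f0.
have fhn : 0 < f (h *+ n) by rewrite fn pmulrn_lgt0.
split; first by apply/fle; rewrite f0 ltW.
by move=> e; move: fhn; rewrite e f0 ltxx.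
Qed.

Definition FQ0 (G : r1og) (U : obj) : Type :=
  {h : og_car G | og_pos h /\ U 0}.

Lemma FQ_closed (G : r1og) n U V (p : hom n U V) (h : og_car G) :
  og_pos h /\ U 0 -> og_pos (h *+ n) /\ V 0.
Proof.
case: p => n0 incl [ph u0]; split; first exact: og_pos_muln.
by have := incl 0 u0; rewrite mul0rn.
Qed.

Definition FQ1 (G : r1og) n U V (p : hom n U V) (x : FQ0 G U) : FQ0 G V :=
  exist _ (proj1_sig x *+ n) (FQ_closed p (proj2_sig x)).

Lemma FQ1_wd (G : r1og) n m U V (p : hom n U V) (q : hom m U V)
  (x : FQ0 G U) : hom_eq U n m -> FQ1 p x = FQ1 q x.
Proof.
case=> [emp|enm].
  by exfalso; exact: (emp _ (proj2 (proj2_sig x))).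
by subst m; apply: sig_eqP.
Qed.

Lemma FQ1_id (G : r1og) U (p : hom 1 U U) (x : FQ0 G U) : FQ1 p x = x.
Proof.
by apply: sig_eqP; rewrite /= mulr1n.
Qed.

Lemma FQ1_comp (G : r1og) n m U V W (p : hom n U V) (q : hom m V W)
  (r : hom (m * n) U W) (x : FQ0 G U) : FQ1 q (FQ1 p x) = FQ1 r x.
Proof.
by apply: sig_eqP; rewrite /= -mulrnA mulnC.
Qed.

Definition FQ (G : r1og) : functor :=
  Functor (@FQ1_wd G) (@FQ1_id G) (@FQ1_comp G).

(* For a point F, every x in F(U) lies over a point loc x of U: the intervals
   through which x factors pairwise meet (flatness) and cannot be split by a
   cover (continuity), so they shrink to a single point, and loc (n.x) = n.loc x.
   Fixing x0, flatness writes x = n.z and x0 = m.z for a common z, and n/m is a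
   well-defined ratio of x to x0; it is injective on each F(U), multiplicative,
   and loc x = ratio x * loc x0.  The ratios form the positive cone of a rank one
   subgroup S of Q.  If loc x0 > 0, then x |-> loc x identifies F with F_H for
   H = S.loc x0; otherwise every element lies over 0 and x |-> ratio x identifies
   F with F'_S.  Conversely, a natural isomorphism F_H ~ F_H' preserves the
   underlying reals, so H = H'; an isomorphism F'_G ~ F'_G' is an isomorphism of
   the positive cones, which extends to the groups; and F_H is inhabited on
   intervals avoiding 0, where F'_G is empty. *)

From Pilot Require Import Defs.
From HB Require Import structures.
From mathcomp Require Import all_boot all_order all_algebra.
From mathcomp Require Import Rstruct.
From mathcomp Require Import ring lra.
From mathcomp Require Import boolp classical_sets reals.
From Stdlib Require Import ClassicalEpsilon.
(* Re-import so that [hom] denotes the morphisms of C, not [vector.hom]. *)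
Import Pilot.Defs.

Set Implicit Arguments.
Unset Strict Implicit.
Unset Printing Implicit Defensive.
Import Order.TTheory GRing.Theory Num.Theory.
Local Open Scope ring_scope.

(** * Objects and morphisms of C *)

Definition itv (a b x : R) : Prop := 0 <= x /\ a < x /\ x < b.

Lemma is_obj_ext (P Q : R -> Prop) : is_obj P -> (forall x, P x <-> Q x) -> is_obj Q.
Proof.
move=> [h|[[a [b [h1 [h2 h3]]]]|[b [h1 h3]]]] e.
- by left=> x /e /h.
- by right; left; exists a, b; split=> //; split=> // x; rewrite -e.
- by right; right; exists b; split => // x; rewrite -e.
Qed.

Lemma is_obj_itv a b : is_obj (itv a b).
Proof.
have [b0|b0] := lerP b 0; first by left=> x [? []]; lra.
have [ba|ab] := lerP b a; first by left=> x [? []]; lra.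
have [a0|a0] := ltrP a 0.
  right; right; exists b; split=> // x.
  by split=> [[? []]|[? ?]] //; do !split => //; lra.
right; left; exists a, b; split; [lra | split=> // x].
by split=> [[? []]|[? ?]] //; do !split => //; lra.
Qed.

Lemma itv_pos_mem (x : R) : 0 < x -> itv 0 (x + 1) x.
Proof. by move=> x0; rewrite /itv; lra. Qed.

Lemma itv_mem0 (b : R) : 0 < b -> itv (-1) b 0.
Proof. by move=> b0; rewrite /itv; lra. Qed.

Lemma obj_is_itv (U : obj) : exists a b, forall x, U x <-> itv a b x.
Proof.
case: U => P [h|[[a [b [a0 [_ e]]]]|[b [_ e]]]] /=.
- by exists 0, 0 => x; split=> [/h //|[? []]]; lra.
- by exists a, b => x; rewrite e; split=> [[? ?]|[? ?]] //; do !split => //; lra.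
- by exists (-1), b => x; rewrite e; split=> [[? ?]|[? []]] //; do !split => //; lra.
Qed.

Lemma obj_ge0 (U : obj) x : U x -> 0 <= x.
Proof. by have [a [b e]] := obj_is_itv U => /e []. Qed.

Lemma is_obj_cap (U V : obj) : is_obj (fun x => U x /\ V x).
Proof.
have [a [b eU]] := obj_is_itv U; have [c [d eV]] := obj_is_itv V.
apply: (is_obj_ext (is_obj_itv (Num.max a c) (Num.min b d))) => x.
rewrite eU eV /itv gt_max lt_min; split.
  by case=> x0 [/andP[ax cx] /andP[xb xd]].
by case=> [[x0 [ax xb]] [_ [cx xd]]]; rewrite ax cx xb xd.
Qed.

Lemma is_obj_div n (U : obj) : (0 < n)%N -> is_obj (fun x => U (x *+ n)).
Proof.
move=> n0; have [a [b e]] := obj_is_itv U; have np : 0 < n%:R :> R by rewrite ltr0n.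
apply: (is_obj_ext (is_obj_itv (a / n%:R) (b / n%:R))) => x.
by rewrite e /itv -[x *+ n]mulr_natr ltr_pdivrMr // ltr_pdivlMr // pmulr_lge0.
Qed.

Lemma is_obj_mul n (U : obj) : (0 < n)%N -> is_obj (fun x => U (x / n%:R)).
Proof.
move=> n0; have [a [b e]] := obj_is_itv U; have np : 0 < n%:R :> R by rewrite ltr0n.
apply: (is_obj_ext (is_obj_itv (a * n%:R) (b * n%:R))) => x.
by rewrite e /itv ltr_pdivrMr // ltr_pdivlMr // pmulr_lge0 // invr_gt0.
Qed.

Definition obj_itv a b : obj := Obj (is_obj_itv a b).
Definition obj_cap (U V : obj) : obj := Obj (is_obj_cap U V).
Definition obj_div n U (n0 : (0 < n)%N) : obj := Obj (is_obj_div U n0).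
Definition obj_mul n U (n0 : (0 < n)%N) : obj := Obj (is_obj_mul U n0).

Lemma hom_gt0 n U V : hom n U V -> (0 < n)%N.
Proof. by case. Qed.

Lemma hom_id U : hom 1 U U.
Proof. by split=> // x; rewrite mulr1n. Qed.

Lemma hom_comp n m U V W : hom n U V -> hom m V W -> hom (m * n) U W.
Proof.
move=> [n0 hUV] [m0 hVW]; split; first by rewrite muln_gt0 n0 m0.
by move=> x /hUV /hVW; rewrite -mulrnA mulnC.
Qed.

Lemma hom_capl U V : hom 1 (obj_cap U V) U.
Proof. by split=> // x [ux _]; rewrite mulr1n. Qed.

Lemma hom_capr U V : hom 1 (obj_cap U V) V.
Proof. by split=> // x [_ vx]; rewrite mulr1n. Qed.

Lemma hom_mul n U (n0 : (0 < n)%N) : hom n U (obj_mul U n0).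
Proof.
split=> // x ux; rewrite /= -[x *+ n]mulr_natr mulfK //.
by rewrite pnatr_eq0 -lt0n.
Qed.

Lemma hom_mul_incl n U V W (n0 : (0 < n)%N) :
  hom n U V -> hom 1 W U -> hom 1 (obj_mul W n0) V.
Proof.
move=> [_ hUV] [_ hWU]; split=> // y /= /hWU; rewrite mulr1n => /hUV.
by rewrite -[_ *+ n]mulr_natr divfK // pnatr_eq0 -lt0n.
Qed.

Lemma hom_cap_divl n m U V (n0 : (0 < n)%N) (m0 : (0 < m)%N) :
  hom n (obj_cap (obj_div U n0) (obj_div V m0)) U.
Proof. by split=> // x []. Qed.

Lemma hom_cap_divr n m U V (n0 : (0 < n)%N) (m0 : (0 < m)%N) :
  hom m (obj_cap (obj_div U n0) (obj_div V m0)) V.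
Proof. by split=> // x []. Qed.

(** * Rank one groups *)

Definition is_subgroup (V : zmodType) (P : V -> Prop) : Prop :=
  P 0 /\ forall x y, P x -> P y -> P (x - y).

Section Subgroup.
Variables (V : zmodType) (P : V -> Prop).
Hypothesis hP : is_subgroup P.

Lemma subgroup0 : P 0. Proof. by case: hP. Qed.

Lemma subgroupB x y : P x -> P y -> P (x - y). Proof. by case: hP => _; apply. Qed.

Lemma subgroupN x : P x -> P (- x).
Proof. by rewrite -sub0r; apply: subgroupB; exact: subgroup0. Qed.

Lemma subgroupD x y : P x -> P y -> P (x + y).
Proof. by move=> Px /subgroupN Py; rewrite -[y]opprK; exact: subgroupB. Qed.

Lemma subgroupMn x n : P x -> P (x *+ n).
Proof.
move=> Px; elim: n => [|n IH]; rewrite ?mulr0n ?mulrS; first exact: subgroup0.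
exact: subgroupD.
Qed.

Lemma subgroupMz x (i : int) : P x -> P (x *~ i).
Proof.
move=> Px; case: i => n; rewrite ?NegzE ?mulrNz; first exact: subgroupMn.
by apply: subgroupN; exact: subgroupMn.
Qed.

End Subgroup.

Lemma morph_addMn (V W : zmodType) (f : V -> W) :
  {morph f : x y / x + y} -> forall x n, f (x *+ n) = f x *+ n.
Proof.
move=> fD x; have f0 : f 0 = 0 by apply: (addrI (f 0)); rewrite -fD !addr0.
by elim=> [|n IH]; rewrite ?mulr0n // !mulrS fD IH.
Qed.

Lemma subgroup_sub_of_pos (T : realDomainType) (P Q : T -> Prop) :
  is_subgroup P -> is_subgroup Q -> (forall x, 0 < x -> P x -> Q x) ->
  forall x, P x -> Q x.
Proof.
move=> hP hQ pos x Px; case: (ltrgtP x 0) => [x0|x0|->]; last exact: subgroup0.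
  rewrite -[x]opprK; apply: (subgroupN hQ); apply: pos; first by rewrite oppr_gt0.
  exact: subgroupN.
exact: pos.
Qed.

Lemma subQ_common_divisor (S : rat -> Prop) c d : subgroupQ S -> S c -> S d -> c != 0 ->
  exists e (i j : int), S e /\ c = e *~ i /\ d = e *~ j.
Proof.
move=> hS Sc Sd c0; pose a := numq (d / c); pose b := denq (d / c).
have b0 : (b%:~R : rat) != 0 by rewrite intr_eq0 denq_neq0.
pose e := c / b%:~R.
have ec : c = e *~ b by rewrite -mulrzr divfK.
have ed : d = e *~ a by rewrite -mulrzr /e /a numqE -/b; field; rewrite c0.
exists e, b, a; split => //.
(* Bezout, as numq and denq are coprime. *)
have [u [v uv]] := Bezoutz a b.
have -> : e = d *~ u + c *~ v.
  rewrite ed ec -!mulrzA -mulrzDr (mulrC a) (mulrC b) uv.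
  by rewrite /gcdz (eqP (coprime_num_den _)) mulr1z.
by apply: (subgroupD hS); apply: (subgroupMz hS).
Qed.

Lemma gt0_mulrzE (T : numDomainType) (e : T) (i : int) :
  0 < e *~ i -> e *~ i = `|e| *+ `|i|%N.
Proof. by move=> /gtr0_norm <-; rewrite normrMz -abszE pmulrn. Qed.

Section RankOneEmbedding.
Variables (V : zmodType) (P : V -> Prop) (S : rat -> Prop) (f : V -> rat).
Hypotheses (hP : is_subgroup P) (hS : subgroupQ S).
Hypothesis fD : forall x y, P x -> P y -> f (x + y) = f x + f y.
Hypothesis f_inj : forall x y, P x -> P y -> f x = f y -> x = y.
Hypothesis fS : forall x, P x -> S (f x).
Hypothesis f_onto : forall q, S q -> exists x, P x /\ f x = q.

Lemma emb0 : f 0 = 0.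
Proof.
by apply: (addrI (f 0)); rewrite -fD ?addr0 //; exact: subgroup0.
Qed.

Lemma embMz x (i : int) : P x -> f (x *~ i) = f x *~ i.
Proof.
move=> Px; have fN y : P y -> f (- y) = - f y.
  move=> Py; apply: (addrI (f y)); rewrite -fD ?subrr ?emb0 //; exact: subgroupN.
have fMn n : f (x *+ n) = f x *+ n.
  elim: n => [|n IH]; first by rewrite !mulr0n emb0.
  by rewrite !mulrS fD ?IH //; exact: subgroupMn.
by case: i => n; rewrite ?NegzE ?mulrNz ?fN ?fMn //; exact: subgroupMn.
Qed.

Lemma emb_common_divisor x y : P x -> P y -> x != 0 ->
  exists z (i j : int), P z /\ x = z *~ i /\ y = z *~ j.
Proof.
move=> Px Py x0.
have fx0 : f x != 0.
  by apply: contraNneq x0 => fx0; apply/eqP/f_inj => //; [exact: subgroup0 | rewrite emb0].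
have [e [i [j [Se [ei ej]]]]] := subQ_common_divisor hS (fS Px) (fS Py) fx0.
have [z [Pz fz]] := f_onto Se.
exists z, i, j; split => //.
by split; apply: f_inj; rewrite ?embMz ?fz //; exact: subgroupMz.
Qed.

End RankOneEmbedding.

Lemma mulrn_gt0_gt0 (T : numDomainType) (x : T) n : 0 < x *+ n -> (0 < n)%N.
Proof. by case: n => //; rewrite mulr0n ltxx. Qed.

Lemma pos_common_divisor (T : realDomainType) (z x y : T) (i j : int) :
  0 < x -> 0 < y -> x = z *~ i -> y = z *~ j ->
  [/\ 0 < `|z|, (0 < `|i|)%N, (0 < `|j|)%N, x = `|z| *+ `|i|%N & y = `|z| *+ `|j|%N].
Proof.
move=> x0 y0 xz yz; subst x y.
have xE := gt0_mulrzE x0; have yE := gt0_mulrzE y0.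
rewrite xE in x0 *; rewrite yE in y0 *.
have n0 := mulrn_gt0_gt0 x0; have m0 := mulrn_gt0_gt0 y0.
by split => //; rewrite -(pmulrn_lgt0 _ n0).
Qed.

Section RankOneR.
Variables (H : R -> Prop) (hH : rank_one_R H).

Lemma rank_one_R_subgroup : is_subgroup H.
Proof. by case: hH. Qed.

Lemma rank_one_R_normr x : H x -> H `|x|.
Proof.
have hsub := rank_one_R_subgroup.
by case: (lerP 0 x) => [/ger0_norm ->|/ltr0_norm ->] // /(subgroupN hsub).
Qed.

Lemma rank_one_R_common_divisor x y : H x -> H y -> 0 < x -> 0 < y ->
  exists z n m, [/\ H z /\ 0 < z, (0 < n)%N, (0 < m)%N, x = z *+ n & y = z *+ m].
Proof.
move=> Hx Hy x0 y0; have hsub := rank_one_R_subgroup.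
case: hH => _ [S [f [hS [_ [fD [f_inj [fS f_onto]]]]]]].
have [z [i [j [Hz [xz yz]]]]] :=
  emb_common_divisor hsub hS fD f_inj fS f_onto Hx Hy (lt0r_neq0 x0).
have [z0 n0 m0 xE yE] := pos_common_divisor x0 y0 xz yz.
by exists `|z|, `|i|%N, `|j|%N; split => //; split => //; exact: rank_one_R_normr.
Qed.

Lemma rank_one_R_pos : exists h, H h /\ 0 < h.
Proof.
have hsub := rank_one_R_subgroup.
case: hH => _ [S [f [hS [[q [Sq q0]] [fD [f_inj [fS f_onto]]]]]]].
have [h [Hh fh]] := f_onto _ Sq.
exists `|h|; split; first exact: rank_one_R_normr.
rewrite normr_gt0; apply: contra_notN q0 => /eqP h0.
by rewrite -fh h0 (emb0 hsub fD).
Qed.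

End RankOneR.

Lemma rank_one_R_scale (S : rat -> Prop) (t : R) :
  subgroupQ S -> (exists q, S q /\ q <> 0) -> 0 < t ->
  rank_one_R (fun h => exists q, S q /\ h = ratr q * t).
Proof.
move=> hS S_nz t0.
have scale_inj q1 q2 : ratr q1 * t = ratr q2 * t -> q1 = q2.
  by move/(mulIf (lt0r_neq0 t0)); exact: fmorph_inj.
split.
  split; first by exists 0; rewrite rmorph0 mul0r; split => //; exact: subgroup0.
  move=> _ _ [q1 [S1 ->]] [q2 [S2 ->]]; exists (q1 - q2).
  by rewrite rmorphB mulrBl; split => //; exact: subgroupB.
pose f h := epsilon (inhabits 0) (fun q => h = ratr q * t).
have fE q : f (ratr q * t) = q.
  apply: scale_inj; symmetry.
  exact: (epsilon_spec (inhabits 0) (fun q' => ratr q * t = ratr q' * t) (ex_intro _ q erefl)).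
exists S, f; do 2!split => //.
split; first by move=> _ _ [q1 [_ ->]] [q2 [_ ->]]; rewrite -mulrDl -rmorphD !fE.
split; first by move=> _ _ [q1 [_ ->]] [q2 [_ ->]]; rewrite !fE => ->.
split; first by move=> _ [q [Sq ->]]; rewrite fE.
by move=> q Sq; exists (ratr q * t); split; [exists q | rewrite fE].
Qed.

Section OrderedRankOne.
Variable G : r1og.

Definition og_embedding (f : og_car G -> rat) : Prop := exists S,
  subgroupQ S /\ (exists q, S q /\ q <> 0) /\
  (forall x y, f (x + y) = f x + f y) /\ injective f /\
  (forall x, S (f x)) /\ (forall q, S q -> exists x, f x = q) /\
  (forall x y, og_le x y <-> f x <= f y).

Lemma og_embedding_ex : exists f, og_embedding f.
Proof. by have [S [f hf]] := og_rank1 G; exists f, S. Qed.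

Definition og_val : og_car G -> rat :=
  proj1_sig (constructive_indefinite_description _ og_embedding_ex).

Lemma og_valP : og_embedding og_val.
Proof. exact: proj2_sig (constructive_indefinite_description _ og_embedding_ex). Qed.

Lemma og_valD x y : og_val (x + y) = og_val x + og_val y.
Proof. by have [S [_ [_ [fD _]]]] := og_valP. Qed.

Lemma og_val_is_zmod_morphism : zmod_morphism og_val.
Proof.
by move=> x y; apply: (addIr (og_val y)); rewrite -og_valD subrK addrNK.
Qed.

HB.instance Definition _ := GRing.isZmodMorphism.Build _ _ og_val og_val_is_zmod_morphism.

Lemma og_val_inj : injective og_val.
Proof. by have [S [_ [_ [_ [f_inj _]]]]] := og_valP. Qed.

Lemma og_leE x y : og_le x y <-> og_val x <= og_val y.
Proof. by have [S [_ [_ [_ [_ [_ [_ fle]]]]]]] := og_valP. Qed.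

Lemma og_posE h : og_pos h <-> 0 < og_val h.
Proof.
rewrite /og_pos og_leE raddf0; split=> [[h_ge0 h0]|h_gt0].
  rewrite lt_def h_ge0 andbT; apply/eqP => fh0; apply: h0.
  by apply: og_val_inj; rewrite fh0 raddf0.
by split=> [|h0]; [exact: ltW | move: h_gt0; rewrite h0 raddf0 ltxx].
Qed.

Lemma og_pos_common_divisor a b : og_pos a -> og_pos b ->
  exists (e : og_car G) n m, [/\ og_pos e, (0 < n)%N, (0 < m)%N, a = e *+ n & b = e *+ m].
Proof.
move=> /og_posE a0 /og_posE b0.
have [S [hS [_ [_ [_ [fS [f_onto _]]]]]]] := og_valP.
have [e [i [j [Se [ai bj]]]]] := subQ_common_divisor hS (fS a) (fS b) (lt0r_neq0 a0).
have [z0 n0 m0 aE bE] := pos_common_divisor a0 b0 ai bj.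
have [w fw] : exists w, og_val w = `|e|.
  have [w fw] := f_onto _ Se.
  case: (lerP 0 e) => [/ger0_norm ->|/ltr0_norm ->]; first by exists w.
  by exists (- w); rewrite raddfN /= fw.
exists w, `|i|%N, `|j|%N; split => //; first by apply/og_posE; rewrite fw.
  by apply: og_val_inj; rewrite raddfMn /= fw.
by apply: og_val_inj; rewrite raddfMn /= fw.
Qed.

Lemma og_pos_exists : exists h : og_car G, og_pos h.
Proof.
have [S [_ [[q [Sq q0]] [_ [_ [_ [f_onto _]]]]]]] := og_valP.
have [h fh] := f_onto _ Sq.
have [h0|h0] : 0 < og_val h \/ 0 < og_val (- h).
  by rewrite raddfN /= oppr_gt0 fh; move/eqP: q0; rewrite neq_lt => /orP[]; [right | left].
- by exists h; apply/og_posE.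
- by exists (- h); apply/og_posE.
Qed.

Lemma og_pos_add (a b : og_car G) : og_pos a -> og_pos b -> og_pos (a + b).
Proof. by rewrite !og_posE og_valD; exact: addr_gt0. Qed.

Lemma og_le_pos (x y : og_car G) : og_le x y <-> x = y \/ og_pos (y - x).
Proof.
rewrite og_leE og_posE raddfB subr_gt0 le_eqVlt; split=> [/orP[/eqP/og_val_inj|]|[->|]] //.
- by left.
- by right.
- by rewrite eqxx.
- by move=> ->; rewrite orbT.
Qed.

Lemma og_decomp (g : og_car G) :
  exists pq : og_car G * og_car G, [/\ og_pos pq.1, og_pos pq.2 & g = pq.1 - pq.2].
Proof.
have [e e_pos] := og_pos_exists; have /og_posE e0 := e_pos.
have [g0|g0] := ltP 0 (og_val g).
  exists (g + e, e); rewrite /= addrK; split => //.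
  by apply/og_posE; rewrite og_valD addr_gt0.
exists (e, e - g); rewrite /= opprB [e + (_ - _)]addrC subrK; split => //.
by apply/og_posE; rewrite raddfB /= subr_gt0 (le_lt_trans g0).
Qed.

End OrderedRankOne.

Record subQ (S : rat -> Prop) (hS : subgroupQ S) :=
  SubQ { subQ_val : rat; subQ_valP : `[< S subQ_val >] }.

HB.instance Definition _ S hS := [isSub for @subQ_val S hS].
HB.instance Definition _ S hS := [Choice of @subQ S hS by <:].

Section SubgroupQ.
Variables (S : rat -> Prop) (hS : subgroupQ S).
Local Notation subQ := (subQ hS).

Definition subQ0 : subQ := SubQ hS (asboolT (subgroup0 hS)).
Definition subQ_opp (x : subQ) : subQ :=
  SubQ hS (asboolT (subgroupN hS (asboolW (subQ_valP x)))).
Definition subQ_add (x y : subQ) : subQ :=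
  SubQ hS (asboolT (subgroupD hS (asboolW (subQ_valP x)) (asboolW (subQ_valP y)))).

Lemma subQ_addA : associative subQ_add.
Proof. by move=> x y z; apply: val_inj; rewrite /= addrA. Qed.
Lemma subQ_addC : commutative subQ_add.
Proof. by move=> x y; apply: val_inj; rewrite /= addrC. Qed.
Lemma subQ_add0 : left_id subQ0 subQ_add.
Proof. by move=> x; apply: val_inj; rewrite /= add0r. Qed.
Lemma subQ_addN : left_inverse subQ0 subQ_opp subQ_add.
Proof. by move=> x; apply: val_inj; rewrite /= addNr. Qed.

HB.instance Definition _ :=
  GRing.isZmodule.Build subQ subQ_addA subQ_addC subQ_add0 subQ_addN.

Hypothesis S_nontrivial : exists q, S q /\ q <> 0.

Lemma subQ_rank1 : exists (S' : rat -> Prop) (f : subQ -> rat),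
  subgroupQ S' /\ (exists q, S' q /\ q <> 0) /\
  (forall x y, f (x + y) = f x + f y) /\ (forall x y, f x = f y -> x = y) /\
  (forall x, S' (f x)) /\ (forall q, S' q -> exists x, f x = q) /\
  (forall x y, subQ_val x <= subQ_val y <-> f x <= f y).
Proof.
exists S, (@subQ_val S hS); do 3!split => //; split; first exact: val_inj.
split; first by move=> x; exact: asboolW (subQ_valP x).
by split=> // q Sq; exists (SubQ hS (asboolT Sq)).
Qed.

Definition og_of_subQ : r1og := R1og subQ_rank1.

Lemma og_of_subQ_posE (h : og_car og_of_subQ) : og_pos h <-> 0 < subQ_val h.
Proof.
rewrite /og_pos /=; split=> [[h_ge0 h0]|h_gt0].
  by rewrite lt_def h_ge0 andbT; apply: contra_notN h0 => /eqP h0; apply: val_inj.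
by split=> [|h0]; [exact: ltW | move: h_gt0; rewrite h0 ltxx].
Qed.

End SubgroupQ.

(** * The points p_H and q_H *)

Definition natural (F G : functor) (a : forall U, F0 F U -> F0 G U) : Prop :=
  forall n U V (p : hom n U V) (x : F0 F U), a V (F1 p x) = F1 p (a U x).

Lemma iso_functor_of_bij (F G : functor) (a : forall U, F0 F U -> F0 G U) :
  natural a -> (forall U, injective (a U)) -> (forall U y, exists x, a U x = y) ->
  iso_functor F G.
Proof.
move=> a_nat a_inj a_onto.
pose b U y := proj1_sig (constructive_indefinite_description _ (a_onto U y)).
have abK U y : a U (b U y) = y.
  by rewrite /b; case: constructive_indefinite_description.
by exists a, b; split=> [U x|]; [apply: a_inj; rewrite abK | split].
Qed.

Section PointP.
Variables (H : R -> Prop) (hH : rank_one_R H).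

Definition FH_pt x (Hx : H x) (x0 : 0 < x) : FH0 H (obj_itv 0 (x + 1)) :=
  exist _ x (conj (itv_pos_mem x0) (conj Hx x0)).

Lemma flat_FH : flat (FH hH).
Proof.
split.
  have [h [Hh h0]] := rank_one_R_pos hH.
  by exists (obj_itv 0 (h + 1)); constructor; exact: FH_pt Hh h0.
split.
  move=> U V [x [Ux [Hx x0]]] [y [Vy [Hy y0]]].
  have [z [n [m [[Hz z0] n0 m0 xE yE]]]] := rank_one_R_common_divisor hH Hx Hy x0 y0.
  have Wz : obj_cap (obj_div U n0) (obj_div V m0) z by split; rewrite /= -?xE -?yE.
  exists _, (exist _ z (conj Wz (conj Hz z0))), n, m.
  exists (hom_cap_divl U V n0 m0), (hom_cap_divr U V n0 m0).
  by split; apply: sig_eqP.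
move=> U V n m p q x /(congr1 sval) /= /(mulrIn (lt0r_neq0 (proj2 (proj2 (svalP x))))) nm.
by exists U, x, 1%N, (hom_id U); split; [exact: FH1_id | right; rewrite nm].
Qed.

Lemma continuous_FH : continuous (FH hH).
Proof.
move=> U I Ui sub cover [y [Uy Hy_pos]]; have [i Uiy] := cover _ Uy.
by exists i, (exist _ y (conj Uiy Hy_pos)); apply: sig_eqP; rewrite /= mulr1n.
Qed.

End PointP.

Section PointQ.
Variable G : r1og.

Definition FQ_pt (U : obj) (U0 : U 0) h (h0 : og_pos h) : FQ0 G U := exist _ h (conj h0 U0).

Lemma FQ_F1_val n U V (p : hom n U V) (x : FQ0 G U) :
  sval (@F1 (FQ G) _ _ _ p x) = sval x *+ n.
Proof. by []. Qed.

Lemma flat_FQ : flat (FQ G).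
Proof.
split.
  have [h h0] := og_pos_exists G; exists (obj_itv (-1) 1); constructor.
  by apply: (FQ_pt _ h0); exact: itv_mem0.
split.
  move=> U V [x [x0 U0]] [y [y0 V0]].
  have [z [n [m [z0 n0 m0 xE yE]]]] := og_pos_common_divisor x0 y0.
  have W0 : obj_cap (obj_div U n0) (obj_div V m0) 0 by split; rewrite /= mul0rn.
  exists _, (FQ_pt W0 z0), n, m, (hom_cap_divl U V n0 m0), (hom_cap_divr U V n0 m0).
  by split; apply: sig_eqP.
move=> U V n m p q x /(congr1 (fun y => og_val (sval y))) /=.
have x0 : og_val (sval x) != 0 by apply: lt0r_neq0; apply/og_posE; case: (svalP x).
rewrite !raddfMn /= => /(mulrIn x0) nm.
by exists U, x, 1%N, (hom_id U); split; [exact: FQ1_id | right; rewrite nm].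
Qed.

Lemma continuous_FQ : continuous (FQ G).
Proof.
move=> U I Ui sub cover [y [y0 U0]]; have [i Ui0] := cover _ U0.
by exists i, (FQ_pt Ui0 y0); apply: sig_eqP; rewrite /= mulr1n.
Qed.

End PointQ.

(** * Isomorphisms between the points p_H and q_H *)

Section PointPIso.
Variables (H H' : R -> Prop) (hH : rank_one_R H) (hH' : rank_one_R H').

Lemma FH_natural_val (a : forall U, F0 (FH hH) U -> F0 (FH hH') U) :
  natural a -> forall U x, sval (a U x) = sval x.
Proof.
(* Naturality along U /\ (x - d, x + d) -> U puts a x at distance < d from x. *)
move=> a_nat U x; have [//|yx] := eqVneq (sval (a U x)) (sval x).
have [Ux [Hx x0]] := svalP x; set y := sval (a U x) in yx *.
pose d := `|y - sval x|; have d0 : 0 < d by rewrite normr_gt0 subr_eq0.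
have Vx : obj_cap U (obj_itv (sval x - d) (sval x + d)) (sval x).
  by split => //; rewrite /= /itv; lra.
pose xV : FH0 H _ := exist _ (sval x) (conj Vx (conj Hx x0)).
have xVx : @F1 (FH hH) _ _ _ (hom_capl U _) xV = x by apply: sig_eqP; rewrite /= mulr1n.
have := a_nat _ _ _ (hom_capl U _) xV; rewrite xVx => /(congr1 sval) /=.
rewrite mulr1n -/y => yE; have [[_ yV] _] := svalP (a _ xV); rewrite -yE in yV.
case: yV => _ [yl yr].
by have := ltxx d; rewrite {1}/d ltr_distl yl yr.
Qed.

Lemma FH_iso_eq : iso_functor (FH hH) (FH hH') -> forall x, H x <-> H' x.
Proof.
move=> [a [b [baK [abK a_nat]]]]; have a_val := FH_natural_val a_nat.
have sH := rank_one_R_subgroup hH; have sH' := rank_one_R_subgroup hH'.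
split; apply: subgroup_sub_of_pos => // {}x x0 Hx.
  have /= <- := a_val _ (FH_pt Hx x0).
  by case: (svalP (a _ (FH_pt Hx x0))) => _ [].
rewrite -[x]/(sval (FH_pt Hx x0)) -(abK _ (FH_pt Hx x0)) a_val.
by case: (svalP (b _ (FH_pt Hx x0))) => _ [].
Qed.

Lemma FH_iso_of_eq : (forall x, H x <-> H' x) -> iso_functor (FH hH) (FH hH').
Proof.
move=> HE; have a_ok U (x : FH0 H U) : U (sval x) /\ H' (sval x) /\ 0 < sval x.
  by case: (svalP x) => Ux [/HE Hx x0].
apply: (@iso_functor_of_bij (FH hH) (FH hH') (fun U x => exist _ (sval x) (a_ok U x))).
- by move=> n U V p x; apply: sig_eqP.
- by move=> U x y xy; apply: sig_eqP; exact: (congr1 sval xy).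
- move=> U [y [Uy [H'y y0]]]; exists (exist _ y (conj Uy (conj ((HE y).2 H'y) y0))).
  exact: sig_eqP.
Qed.

Lemma FH_iso_iff : iso_functor (FH hH) (FH hH') <-> (forall x, H x <-> H' x).
Proof. by split; [exact: FH_iso_eq | exact: FH_iso_of_eq]. Qed.

End PointPIso.

Lemma FH_FQ_not_iso (H : R -> Prop) (hH : rank_one_R H) (G : r1og) :
  ~ iso_functor (FH hH) (FQ G).
Proof.
move=> [a _]; have [h [Hh h0]] := rank_one_R_pos hH.
by case: (svalP (a _ (FH_pt Hh h0))) => _ [_ []]; rewrite ltxx.
Qed.

Section ConeExtension.
Variables (G G' : r1og) (al : og_car G -> og_car G').
Hypothesis al_pos : forall h, og_pos h -> og_pos (al h).
Hypothesis alD : forall h h', og_pos h -> og_pos h' -> al (h + h') = al h + al h'.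
Hypothesis al_inj : forall h h', og_pos h -> og_pos h' -> al h = al h' -> h = h'.
Hypothesis al_onto : forall h', og_pos h' -> exists h, og_pos h /\ al h = h'.

Lemma al_diff_eq p q p' q' : og_pos p -> og_pos q -> og_pos p' -> og_pos q' ->
  p - q = p' - q' -> al p - al q = al p' - al q'.
Proof.
move=> p0 q0 p'0 q'0 /eqP; rewrite subr_eq addrAC eq_sym subr_eq => /eqP e.
by apply/eqP; rewrite subr_eq addrAC eq_sym subr_eq -!alD ?e //; exact: og_pos_add.
Qed.

(* Independent of the chosen decomposition g = p - q, by [al_diff_eq]. *)
Definition cone_ext (g : og_car G) : og_car G' :=
  let pq := proj1_sig (constructive_indefinite_description _ (og_decomp g)) in
  al pq.1 - al pq.2.

Lemma cone_extE p q : og_pos p -> og_pos q -> cone_ext (p - q) = al p - al q.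
Proof.
move=> p0 q0; rewrite /cone_ext.
by case: constructive_indefinite_description => -[p' q'] /= [p'0 q'0 e]; exact: al_diff_eq.
Qed.

Lemma cone_extD : {morph cone_ext : x y / x + y}.
Proof.
move=> x y.
have [[p1 q1] [/= p10 q10 ->]] := og_decomp x; have [[p2 q2] [/= p20 q20 ->]] := og_decomp y.
rewrite addrACA -opprD !cone_extE //; try exact: og_pos_add.
by rewrite !alD // opprD [RHS]addrACA.
Qed.

Lemma cone_ext_is_zmod_morphism : zmod_morphism cone_ext.
Proof.
have ext0 : cone_ext 0 = 0 by apply: (addrI (cone_ext 0)); rewrite -cone_extD !addr0.
move=> x y; rewrite cone_extD; congr (_ + _).
by apply: (addrI (cone_ext y)); rewrite -cone_extD !subrr.
Qed.

HB.instance Definition _ :=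
  GRing.isZmodMorphism.Build _ _ cone_ext cone_ext_is_zmod_morphism.

Lemma cone_ext_pos h : og_pos h -> cone_ext h = al h.
Proof.
have [e e0] := og_pos_exists G.
move=> h0; rewrite -{1}(addrK e h) cone_extE ?alD ?addrK //; exact: og_pos_add.
Qed.

Lemma cone_ext_posE g : og_pos (cone_ext g) <-> og_pos g.
Proof.
split=> [/og_posE ext0|g0]; last by rewrite cone_ext_pos //; exact: al_pos.
apply/og_posE; case: (ltrgtP (og_val g) 0) => // [g0|g0].
  have ng : og_pos (- g) by apply/og_posE; rewrite raddfN /= oppr_gt0.
  have /og_posE := al_pos ng; rewrite -cone_ext_pos // raddfN /= raddfN /= oppr_gt0.
  by move=> /(lt_trans ext0); rewrite ltxx.
have g_0 : g = 0 by apply: og_val_inj; rewrite g0 raddf0.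
by move: ext0; rewrite g_0 !raddf0 ltxx.
Qed.

Lemma cone_ext_inj : injective cone_ext.
Proof.
move=> x y exy; apply/eqP; rewrite -subr_eq0; apply/eqP.
have [[p q] [/= p0 q0 e]] := og_decomp (x - y).
have := raddfB cone_ext x y; rewrite /= exy subrr e cone_extE // => /eqP.
by rewrite subr_eq0 => /eqP /al_inj -> //; rewrite subrr.
Qed.

Lemma og_iso_of_cone : og_iso G G'.
Proof.
exists cone_ext; split; first exact: cone_extD.
split; first exact: cone_ext_inj.
split.
  move=> y; have [[p' q'] [/= p0 q0 ->]] := og_decomp y.
  have [p [p_pos <-]] := al_onto p0; have [q [q_pos <-]] := al_onto q0.
  by exists (p - q); rewrite cone_extE.
move=> x y; rewrite !og_le_pos -raddfB /= cone_ext_posE.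
by split=> [[->|]|[/cone_ext_inj ->|]]; [left | right | left | right].
Qed.

End ConeExtension.

Section PointQIso.
Variables G G' : r1og.

Lemma FQ_natural_val (a : forall U, F0 (FQ G) U -> F0 (FQ G') U) :
  natural a -> forall U U' (x : FQ0 G U) (x' : FQ0 G U'),
  sval x = sval x' -> sval (a U x) = sval (a U' x').
Proof.
move=> a_nat U U' x x' xx'; have [h0 U0] := svalP x; have [_ U'0] := svalP x'.
pose xW := FQ_pt (U := obj_cap U U') (conj U0 U'0) h0.
have -> : x = @F1 (FQ G) _ _ _ (hom_capl U U') xW by apply: sig_eqP; rewrite /= mulr1n.
have -> : x' = @F1 (FQ G) _ _ _ (hom_capr U U') xW by apply: sig_eqP; rewrite /= mulr1n.
by rewrite !a_nat /= !mulr1n.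
Qed.

Lemma FQ_iso_of_og_iso : og_iso G G' -> iso_functor (FQ G) (FQ G').
Proof.
move=> [phi [phiD [phi_inj [phi_onto phi_le]]]].
have phi0 : phi 0 = 0 by apply: (addrI (phi 0)); rewrite -phiD !addr0.
have phi_pos h : og_pos (phi h) <-> og_pos h.
  rewrite /og_pos -phi0 -phi_le; split=> -[h_ge0 h0]; split=> // e; apply: h0.
    by rewrite e.
  by apply: phi_inj; rewrite e.
have a_ok U (x : FQ0 G U) : og_pos (phi (sval x)) /\ U 0.
  by case: (svalP x) => /phi_pos.
apply: (@iso_functor_of_bij (FQ G) (FQ G') (fun U x => exist _ (phi (sval x)) (a_ok U x))).
- by move=> n U V p x; apply: sig_eqP; rewrite /= (morph_addMn phiD).
- by move=> U x y xy; apply: sig_eqP; apply: phi_inj; exact: (congr1 sval xy).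
- move=> U [y [y0 U0]]; have [x xy] := phi_onto y.
  have x0 : og_pos x by apply/phi_pos; rewrite xy.
  by exists (FQ_pt U0 x0); apply: sig_eqP.
Qed.

Lemma og_iso_of_FQ_iso : iso_functor (FQ G) (FQ G') -> og_iso G G'.
Proof.
move=> [a [b [baK [abK a_nat]]]].
pose U0 := obj_itv (-1) 1; have U0_0 : U0 0 by exact: itv_mem0 ltr01.
pose al h := if pselect (og_pos h) is left h0 then sval (a U0 (FQ_pt U0_0 h0)) else 0.
have al_val U (x : FQ0 G U) : sval (a U x) = al (sval x).
  rewrite /al; case: pselect => [h0|]; last by case: (svalP x).
  exact: FQ_natural_val.
have al_pos h : og_pos h -> og_pos (al h).
  by move=> h0; rewrite -(al_val _ (FQ_pt U0_0 h0)); case: (svalP (a _ (FQ_pt U0_0 h0))).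
have alMn h n : og_pos h -> (0 < n)%N -> al (h *+ n) = al h *+ n.
  move=> h0 n0; have := congr1 sval (a_nat _ _ _ (hom_mul U0 n0) (FQ_pt U0_0 h0)).
  by rewrite al_val !FQ_F1_val al_val.
apply: (og_iso_of_cone al_pos).
- move=> h h' h0 h'0; have [e [n [m [e0 n0 m0 -> ->]]]] := og_pos_common_divisor h0 h'0.
  by rewrite -mulrnDr !alMn ?addn_gt0 ?n0 // mulrnDr.
- move=> h h' h0 h'0 hh'.
  have : a U0 (FQ_pt U0_0 h0) = a U0 (FQ_pt U0_0 h'0) by apply: sig_eqP; rewrite !al_val.
  by move=> /(congr1 (b U0)); rewrite !baK => /(congr1 sval).
- move=> h' h'0; pose y := FQ_pt U0_0 h'0.
  exists (sval (b U0 y)); split; first by case: (svalP (b U0 y)).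
  by rewrite -al_val abK.
Qed.

Lemma FQ_iso_iff : iso_functor (FQ G) (FQ G') <-> og_iso G G'.
Proof. by split; [exact: og_iso_of_FQ_iso | exact: FQ_iso_of_og_iso]. Qed.

End PointQIso.

(** * Every point is isomorphic to some p_H or q_H *)

Section Point.
Variables (F : functor) (F_flat : flat F) (F_cont : continuous F).
Local Notation F1 := (@F1 F _ _ _).

Lemma F0_empty U : obj_empty U -> F0 F U -> False.
Proof.
move=> U_empty y; pose Ui (i : False) : obj := match i with end.
pose sub (i : False) : hom 1 (Ui i) U := match i with end.
have cover x : U x -> exists i, Ui i x by move/U_empty.
by have [[]] := F_cont sub cover y.
Qed.

Lemma F0_obj_inhabited U : F0 F U -> exists u, U u.
Proof.
move=> x; apply: contrapT => U_empty; apply: (F0_empty _ x) => u Uu.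
by apply: U_empty; exists u.
Qed.

Lemma F1_mult_inj n m W V (p : hom n W V) (q : hom m W V) w : F1 p w = F1 q w -> n = m.
Proof.
case: F_flat => _ [_ eq_flat] /(eq_flat _ _ _ _ p q) [W' [z [k [r [_ [W'_empty|nm]]]]]].
  by case: (F0_empty W'_empty z).
by apply/eqP; rewrite -(eqn_pmul2r (hom_gt0 r)) nm.
Qed.

Definition factors U (x : F0 F U) (V : obj) : Prop :=
  exists (v : F0 F V) (i : hom 1 V U), F1 i v = x.

Lemma factors_self U (x : F0 F U) : factors x U.
Proof. by exists x, (hom_id U); rewrite F1_id. Qed.

Lemma factors_mono U (x : F0 F U) V W : hom 1 W V -> hom 1 V U -> factors x W -> factors x V.
Proof.
move=> j k [w [i <-]]; exists (F1 j w), k.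
by rewrite (F1_comp j k (hom_comp j k)); apply: F1_wd; right.
Qed.

Lemma factors_meet U (x : F0 F U) V1 V2 :
  factors x V1 -> factors x V2 -> exists w, V1 w /\ V2 w.
Proof.
move=> [v1 [i1 e1]] [v2 [i2 e2]].
case: F_flat => _ [cone_flat _]; have [W [z [n [m [p [q [ep eq]]]]]]] := cone_flat _ _ v1 v2.
have e : F1 (hom_comp p i1) z = F1 (hom_comp q i2) z.
  by rewrite -(F1_comp p i1) -(F1_comp q i2) ep eq e1 e2.
have nm := F1_mult_inj e; rewrite !mul1n in nm; subst m.
have [u Wu] := F0_obj_inhabited z.
by exists (u *+ n); split; [exact: p.2 | exact: q.2].
Qed.

Lemma factors_cover U (x : F0 F U) V I (Vi : I -> obj) (sub : forall i, hom 1 (Vi i) V) :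
  factors x V -> (forall u, V u -> exists i, Vi i u) -> exists i, factors x (Vi i).
Proof.
move=> [v [j <-]] cover; have [i [z <-]] := F_cont sub cover v.
by exists i, z, (hom_comp (sub i) j); rewrite (F1_comp (sub i) j (hom_comp (sub i) j)).
Qed.

Lemma factors_shrink U (x : F0 F U) V (P : R -> Prop) (lo hi : R -> R) :
  factors x V -> (forall u, V u -> exists c, P c /\ lo c < u < hi c) ->
  exists c, P c /\ factors x (obj_cap V (obj_itv (lo c) (hi c))).
Proof.
move=> fV cover.
pose Vi (c : {c | P c}) := obj_cap V (obj_itv (lo (sval c)) (hi (sval c))).
have cover' u : V u -> exists c, Vi c u.
  move=> Vu; have [c [Pc /andP[cl ch]]] := cover u Vu.
  by exists (exist _ c Pc); split=> //; split; [exact: obj_ge0 Vu | split].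
have [[c Pc] fc] := factors_cover (fun c => hom_capl V _) fV cover'.
by exists c.
Qed.

Definition lbs U (x : F0 F U) (y : R) : Prop :=
  exists V, factors x V /\ forall z, V z -> y <= z.

(* The point of [0, oo) over which x lies. *)
Definition loc U (x : F0 F U) : R := sup (lbs x).

Lemma lbs0 U (x : F0 F U) : lbs x 0.
Proof. by exists U; split; [exact: factors_self | move=> z; exact: obj_ge0]. Qed.

Lemma lbs_has_sup U (x : F0 F U) : has_sup (lbs x).
Proof.
split; first by exists 0; exact: lbs0.
have [a [b eU]] := obj_is_itv U; exists b => y [V [fV Vy]].
have [w [/eU [_ [_ wb]] Vw]] := factors_meet (factors_self x) fV.
exact: le_trans (Vy _ Vw) (ltW wb).
Qed.

Lemma loc_ub U (x : F0 F U) y : lbs x y -> y <= loc x.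
Proof. exact: sup_upper_bound (lbs_has_sup x) y. Qed.

Lemma loc_le U (x : F0 F U) b : (forall y, lbs x y -> y <= b) -> loc x <= b.
Proof. by move=> ub; apply: ge_sup; [exists 0; exact: lbs0 | exact: ub]. Qed.

Lemma loc_mem U (x : F0 F U) V : factors x V -> V (loc x).
Proof.
move=> fV; have [a [b eV]] := obj_is_itv V; apply/eV.
have l0 : 0 <= loc x by apply: loc_ub; exact: lbs0.
have [c [ac fc]] : exists c, a < c /\ factors x (obj_cap V (obj_itv c b)).
  apply: (factors_shrink (lo := id) (hi := fun=> b) fV) => u /eV [_ [au ub]].
  by exists ((a + u) / 2); rewrite /=; split; [|apply/andP; split]; lra.
have [d [db fd]] : exists d, d < b /\ factors x (obj_cap V (obj_itv (-1) d)).
  apply: (factors_shrink (lo := fun=> -1) (hi := id) fV) => u /eV [u0 [au ub]].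
  by exists ((u + b) / 2); rewrite /=; split; [|apply/andP; split]; lra.
have cl : c <= loc x.
  by apply: loc_ub; exists (obj_cap V (obj_itv c b)); split => // z [_ [_ [/ltW]]].
have ld : loc x <= d.
  apply: loc_le => y [W [fW Wy]]; have [w [[_ [_ [_ wd]]] Ww]] := factors_meet fd fW.
  exact: le_trans (Wy _ Ww) (ltW wd).
by rewrite /itv; lra.
Qed.

Lemma factors_loc_ball U (x : F0 F U) (e : R) :
  0 < e -> factors x (obj_cap U (obj_itv (loc x - e) (loc x + e))).
Proof.
(* Of the balls of radius e/2 covering U, the one x factors through contains loc x. *)
move=> e0; pose ball c := obj_cap U (obj_itv (c - e / 2) (c + e / 2)).
have [c [_ fc]] : exists c : R, True /\ factors x (ball c).
  apply: (factors_shrink (lo := fun c => c - e / 2) (hi := fun c => c + e / 2) (factors_self x)).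
  by move=> u _; exists u; split => //; apply/andP; split; lra.
have [_ [_ [cl cr]]] := loc_mem fc.
apply: (factors_mono _ (hom_capl U _) fc); split=> // z [Uz [z0 [zl zr]]].
by rewrite mulr1n; split => //=; rewrite /itv; lra.
Qed.

Lemma factors_of_loc U (x : F0 F U) V : hom 1 V U -> V (loc x) -> factors x V.
Proof.
move=> VU; have [c [d eV]] := obj_is_itv V; move=> /eV [_ [cl ld]].
pose e := Num.min (loc x - c) (d - loc x).
have /andP[ec ed] : (e <= loc x - c) && (e <= d - loc x) by rewrite -le_min.
have e0 : 0 < e by rewrite lt_min !subr_gt0 cl ld.
apply: (factors_mono _ VU (factors_loc_ball x e0)); split=> // z [Uz [z0 [zl zr]]].
by rewrite mulr1n; apply/eV; rewrite /itv; lra.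
Qed.

Lemma loc_unique U (x : F0 F U) s : (forall V, factors x V -> V s) -> s = loc x.
Proof.
move=> fs; have [//|sx] := eqVneq s (loc x).
have e0 : 0 < `|s - loc x| by rewrite normr_gt0 subr_eq0.
have [_ [_ [sl sr]]] := fs _ (factors_loc_ball x e0).
by have := ltxx `|s - loc x|; rewrite {1}ltr_distl sl sr.
Qed.

Lemma loc_F1 n U V (p : hom n U V) (x : F0 F U) : loc (F1 p x) = loc x *+ n.
Proof.
have n0 := hom_gt0 p; have nR0 : n%:R != 0 :> R by rewrite pnatr_eq0 -lt0n.
rewrite -[loc x *+ n]mulr_natr -(divfK nR0 (loc (F1 p x))); congr (_ * _).
apply: loc_unique => W [w [j xw]].
have fW : factors (F1 p x) (obj_mul W n0).
  exists (F1 (hom_mul W n0) w), (hom_mul_incl n0 p j).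
  rewrite (F1_comp _ _ (hom_comp (hom_mul W n0) (hom_mul_incl n0 p j))) -xw.
  by rewrite (F1_comp j p (hom_comp j p)); apply: F1_wd; right; rewrite mul1n muln1.
exact: loc_mem fW.
Qed.


Section BasePoint.
Variables (U0 : obj) (x0 : F0 F U0).

Definition is_ratio U (x : F0 F U) (q : rat) : Prop :=
  exists W (z : F0 F W) n m (p : hom n W U) (p0 : hom m W U0),
    [/\ F1 p z = x, F1 p0 z = x0 & q = n%:R / m%:R].

Lemma is_ratio_ex U (x : F0 F U) : exists q, is_ratio x q.
Proof.
case: F_flat => _ [cone_flat _]; have [W [z [n [m [p [p0 [e e0]]]]]]] := cone_flat _ _ x x0.
by exists (n%:R / m%:R), W, z, n, m, p, p0.
Qed.

Lemma is_ratio_unique U (x : F0 F U) q1 q2 : is_ratio x q1 -> is_ratio x q2 -> q1 = q2.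
Proof.
move=> [W1 [z1 [n1 [m1 [p1 [p1' [e1 e1' ->]]]]]]] [W2 [z2 [n2 [m2 [p2 [p2' [e2 e2' ->]]]]]]].
case: F_flat => _ [cone_flat _]; have [W [z [a [b [pa [pb [ea eb]]]]]]] := cone_flat _ _ z1 z2.
have E1 : F1 (hom_comp pa p1) z = F1 (hom_comp pb p2) z.
  by rewrite -(F1_comp pa p1) -(F1_comp pb p2) ea eb e1 e2.
have E0 : F1 (hom_comp pa p1') z = F1 (hom_comp pb p2') z.
  by rewrite -(F1_comp pa p1') -(F1_comp pb p2') ea eb e1' e2'.
have nE := F1_mult_inj E1; have mE := F1_mult_inj E0.
have m1_0 : m1%:R != 0 :> rat by rewrite pnatr_eq0 -lt0n (hom_gt0 p1').
have m2_0 : m2%:R != 0 :> rat by rewrite pnatr_eq0 -lt0n (hom_gt0 p2').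
apply/eqP; rewrite eqr_div // -!natrM eqr_nat; apply/eqP.
have ab0 : (0 < a * b)%N by rewrite muln_gt0 (hom_gt0 pa) (hom_gt0 pb).
apply/eqP; rewrite -(eqn_pmul2r ab0); apply/eqP.
transitivity ((n1 * a) * (m2 * b))%N; first by ring.
by rewrite nE -mE; ring.
Qed.

Definition ratio U (x : F0 F U) : rat := epsilon (inhabits 0) (is_ratio x).

Lemma ratioP U (x : F0 F U) : is_ratio x (ratio x).
Proof. exact: epsilon_spec (is_ratio_ex x). Qed.

Lemma ratio_eq U (x : F0 F U) q : is_ratio x q -> ratio x = q.
Proof. exact: is_ratio_unique (ratioP x). Qed.

Lemma ratio_F1 k U V (p : hom k U V) (x : F0 F U) : ratio (F1 p x) = ratio x *+ k.
Proof.
have [W [z [n [m [q [q0 [<- e0 ->]]]]]]] := ratioP x.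
apply: ratio_eq; exists W, z, (k * n)%N, m, (hom_comp q p), q0; split => //.
  by rewrite (F1_comp q p (hom_comp q p)).
by rewrite -[LHS]mulr_natl natrM mulrA.
Qed.

Lemma ratio_gt0 U (x : F0 F U) : 0 < ratio x.
Proof.
have [W [z [n [m [p [p0 [_ _ ->]]]]]]] := ratioP x.
by rewrite divr_gt0 // ltr0n; [exact: hom_gt0 p | exact: hom_gt0 p0].
Qed.

Lemma ratio_x0 : ratio x0 = 1.
Proof.
by apply: ratio_eq; exists U0, x0, 1%N, 1%N, (hom_id U0), (hom_id U0); rewrite F1_id divr1.
Qed.

Lemma ratio_inj U (x y : F0 F U) : ratio x = ratio y -> x = y.
Proof.
case: F_flat => _ [cone_flat _]; have [W [z [n [m [p [q [<- <-]]]]]]] := cone_flat _ _ x y.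
rewrite !ratio_F1 => /(mulrIn (lt0r_neq0 (ratio_gt0 z))) nm; subst m.
by apply: F1_wd; right.
Qed.

Lemma loc_ratio U (x : F0 F U) : loc x = ratr (ratio x) * loc x0.
Proof.
have [W [z [n [m [p [p0 [<- <- ->]]]]]]] := ratioP x.
rewrite !loc_F1 fmorph_div !rmorph_nat -[loc z *+ n]mulr_natr -[loc z *+ m]mulr_natr.
have m0 : m%:R != 0 :> R by rewrite pnatr_eq0 -lt0n (hom_gt0 p0).
by field.
Qed.

Lemma transport U1 (x1 : F0 F U1) (U : obj) : U (loc x1) ->
  exists y : F0 F U, ratio y = ratio x1 /\ loc y = loc x1.
Proof.
move=> U_loc; have U1_loc := loc_mem (factors_self x1).
have [v [j <-]] := factors_of_loc (hom_capl U1 U) (conj U1_loc U_loc).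
by exists (F1 (hom_capr U1 U) v); rewrite !ratio_F1 !loc_F1 !mulr1n.
Qed.

Definition ratio_cone (q : rat) : Prop := exists U (x : F0 F U), ratio x = q.

Lemma ratio_cone_divisor a b : ratio_cone a -> ratio_cone b ->
  exists c n m, [/\ ratio_cone c, (0 < n)%N, (0 < m)%N, a = c *+ n & b = c *+ m].
Proof.
move=> [U [x <-]] [V [y <-]]; case: F_flat => _ [cone_flat _].
have [W [z [n [m [p [q [<- <-]]]]]]] := cone_flat _ _ x y.
exists (ratio z), n, m; rewrite !ratio_F1; split => //; first by exists W, z.
  exact: hom_gt0 p.
exact: hom_gt0 q.
Qed.

Lemma ratio_coneMn q k : ratio_cone q -> (0 < k)%N -> ratio_cone (q *+ k).
Proof.
by move=> [W [x <-]] k0; exists (obj_mul W k0), (F1 (hom_mul W k0) x); rewrite ratio_F1.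
Qed.

Lemma ratio_coneD a b : ratio_cone a -> ratio_cone b -> ratio_cone (a + b).
Proof.
move=> /ratio_cone_divisor/[apply] -[c [n [m [cc n0 _ -> ->]]]].
by rewrite -mulrnDr; apply: ratio_coneMn; rewrite ?addn_gt0 ?n0.
Qed.

Lemma ratio_coneB a b : ratio_cone a -> ratio_cone b -> b < a -> ratio_cone (a - b).
Proof.
move=> /ratio_cone_divisor/[apply] -[c [n [m [[U [z <-]] _ _ -> ->]]]].
rewrite ltr_pMn2l ?ratio_gt0 // => mn.
by rewrite -mulrnBr ?(ltnW mn) //; apply: ratio_coneMn; [exists U, z | rewrite subn_gt0].
Qed.

Definition ratio_group (q : rat) : Prop :=
  exists a b, [/\ ratio_cone a, ratio_cone b & q = a - b].

Lemma ratio_group_ratio U (x : F0 F U) : ratio_group (ratio x).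
Proof.
have cx : ratio_cone (ratio x) by exists U, x.
by exists (ratio x + ratio x), (ratio x); rewrite addrK; split => //; exact: ratio_coneD.
Qed.

Lemma subgroup_ratio_group : subgroupQ ratio_group.
Proof.
have c0 : ratio_cone (ratio x0) by exists U0, x0.
split; first by exists (ratio x0), (ratio x0); rewrite subrr.
move=> _ _ [a [b [ca cb ->]]] [c [d [cc cd ->]]]; exists (a + d), (b + c).
by split; [exact: ratio_coneD | exact: ratio_coneD | rewrite opprB opprD addrACA].
Qed.

Lemma ratio_group_nontrivial : exists q, ratio_group q /\ q <> 0.
Proof.
by exists 1; split; [rewrite -ratio_x0; exact: ratio_group_ratio | exact/eqP/oner_neq0].
Qed.

Lemma ratio_group_cone q : ratio_group q -> 0 < q -> ratio_cone q.
Proof. by move=> [a [b [ca cb ->]]]; rewrite subr_gt0; exact: ratio_coneB. Qed.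

Lemma loc_gt0 (t0 : 0 < loc x0) U (x : F0 F U) : 0 < loc x.
Proof. by rewrite loc_ratio mulr_gt0 // ltr0q ratio_gt0. Qed.

Lemma point_iso_FH (t0 : 0 < loc x0) :
  iso_functor F (FH (rank_one_R_scale subgroup_ratio_group ratio_group_nontrivial t0)).
Proof.
pose H h := exists q, ratio_group q /\ h = ratr q * loc x0.
have a_ok U (x : F0 F U) : U (loc x) /\ H (loc x) /\ 0 < loc x.
  split; first exact: (loc_mem (factors_self x)).
  split; last exact: loc_gt0.
  by exists (ratio x); split; [exact: ratio_group_ratio | exact: loc_ratio].
apply: (@iso_functor_of_bij F (FH _) (fun U x => exist _ (loc x) (a_ok U x))).
- by move=> n U V p x; apply: sig_eqP; rewrite /= loc_F1.
- move=> U x y /(congr1 sval) /=; rewrite (loc_ratio x) (loc_ratio y).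
  by move=> /(mulIf (lt0r_neq0 t0)) /fmorph_inj; exact: ratio_inj.
- move=> U [v [Uv [[q [Gq vE]] v0]]].
  have q0 : 0 < q by move: v0; rewrite vE pmulr_lgt0 // ltr0q.
  have [U1 [x1 x1q]] := ratio_group_cone Gq q0.
  have lx1 : loc x1 = v by rewrite loc_ratio x1q vE.
  have Ux1 : U (loc x1) by rewrite lx1.
  have [y [_ ly]] := transport Ux1.
  by exists y; apply: sig_eqP; rewrite /= ly.
Qed.

Lemma point_iso_FQ (l0 : loc x0 = 0) :
  iso_functor F (FQ (og_of_subQ subgroup_ratio_group ratio_group_nontrivial)).
Proof.
have loc0 U (x : F0 F U) : loc x = 0 by rewrite loc_ratio l0 mulr0.
pose r U (x : F0 F U) : og_car (og_of_subQ subgroup_ratio_group ratio_group_nontrivial) :=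
  SubQ subgroup_ratio_group (asboolT (ratio_group_ratio x)).
have a_ok U (x : F0 F U) : og_pos (r U x) /\ U 0.
  split; first by apply/og_of_subQ_posE; exact: ratio_gt0.
  by rewrite -(loc0 _ x); exact: (loc_mem (factors_self x)).
apply: (@iso_functor_of_bij F (FQ _) (fun U x => exist _ (r U x) (a_ok U x))).
- move=> n U V p x; apply: sig_eqP; apply: val_inj.
  by rewrite /= ratio_F1 (morph_addMn (f := @subQ_val _ subgroup_ratio_group)).
- by move=> U x y /(congr1 (fun s => subQ_val (sval s))); exact: ratio_inj.
- move=> U [s [s0 U_0]]; have Gs := asboolW (subQ_valP s).
  have [U1 [x1 x1s]] := ratio_group_cone Gs (proj1 (og_of_subQ_posE s) s0).
  have Ux1 : U (loc x1) by rewrite loc0.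
  have [y [yx1 _]] := transport Ux1.
  by exists y; apply: sig_eqP; apply: val_inj; rewrite /= yx1.
Qed.

End BasePoint.

Lemma point_classification :
  (exists (H : R -> Prop) (hH : rank_one_R H), iso_functor F (FH hH)) \/
  (exists G : r1og, iso_functor F (FQ G)).
Proof.
have [[U0 [x0]] _] := F_flat.
have [l0|l0] := eqVneq (loc x0) 0.
  by right; eexists; exact: point_iso_FQ l0.
left; do 2!eexists; apply: (point_iso_FH (x0 := x0)).
by rewrite lt_def l0 (loc_ub (lbs0 x0)).
Qed.

End Point.

Theorem theorem3p9 :
  (* p_H and q_H are points: the functors are flat and continuous *)
  (forall (H : R -> Prop) (hH : rank_one_R H), flat (FH hH) /\ continuous (FH hH)) /\
  (forall G : r1og, flat (FQ G) /\ continuous (FQ G)) /\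
  (* injectivity on (b) *)
  (forall (H H' : R -> Prop) (hH : rank_one_R H) (hH' : rank_one_R H'),
     iso_functor (FH hH) (FH hH') <-> (forall x, H x <-> H' x)) /\
  (* injectivity on (a), up to isomorphism of ordered groups *)
  (forall G G' : r1og, iso_functor (FQ G) (FQ G') <-> og_iso G G') /\
  (* the images of (a) and (b) are disjoint *)
  (forall (H : R -> Prop) (hH : rank_one_R H) (G : r1og),
     ~ iso_functor (FH hH) (FQ G)) /\
  (* surjectivity: every point is isomorphic to some p_H or q_H *)
  (forall F : functor, flat F -> continuous F ->
     (exists (H : R -> Prop) (hH : rank_one_R H), iso_functor F (FH hH)) \/
     (exists G : r1og, iso_functor F (FQ G))).
Proof.
split; first by move=> H hH; split; [exact: flat_FH | exact: continuous_FH].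
split; first by move=> G; split; [exact: flat_FQ | exact: continuous_FQ].
split; first exact: FH_iso_iff.
split; first exact: FQ_iso_iff.
split; first exact: FH_FQ_not_iso.
exact: point_classification.
Qed.
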